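(* For every $\psi\in\Psi$, $$\lambda\Big(\#\{i\le n:\beta_i\ge n\,\psi(\lfloor\log n\rfloor)\}\ge1\ \text{for infinitely many } n\Big)=0.$$
   Context: Let $\lambda$ be Lebesgue measure on $[0,1)$, $\tau(x)=2x\bmod1$, $\chi(x)=\lfloor1/x\rfloor$, $B=[1/2,1)$, $\phi(x)=\inf\{n\in\mathbb N_0:\tau^nx\in B\}+1$, $\tau_Bx=\tau^{\phi(x)}x$ (defined $\lambda$-a.e.), and $\beta_i=\chi\circ\tau_B^{\,i-1}$. $\Psi=\{u:\mathbb N\to\mathbb R_{>0}:\sum_{n\ge1}1/u(n)<\infty\}$. Logarithms are natural. *)

From Stdlib Require Import Reals Lra Lia ClassicalEpsilon.
Open Scope R_scope.

Definition tau (x : R) : R := 2 * x - IZR (Int_part (2 * x)).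

Definition chi (x : R) : R := IZR (Int_part (/ x)).

Definition inB (x : R) : Prop := 1/2 <= x < 1.

Definition first_hit (x : R) (n : nat) : Prop :=
  inB (Nat.iter n tau x) /\ forall k, (k < n)%nat -> ~ inB (Nat.iter k tau x).

(* phi(x) = inf{n >= 0 : tau^n x in B} + 1; defined lambda-a.e.
   (off the null set where the orbit never enters B the value is an
   unspecified natural number, which is irrelevant for null-set statements) *)
Definition phi (x : R) : nat :=
  epsilon (inhabits 0%nat) (fun m => exists n, m = S n /\ first_hit x n).

Definition tauB (x : R) : R := Nat.iter (phi x) tau x.

Definition beta (i : nat) (x : R) : R := chi (Nat.iter (i - 1) tauB x).

Definition inPsi (u : nat -> R) : Prop :=
  (forall n, (1 <= n)%nat -> 0 < u n) /\
  exists l, infinite_sum (fun k => / u (S k)) l.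

Definition floor_log (n : nat) : nat := Z.to_nat (Int_part (ln (INR n))).

Definition lebesgue_null (A : R -> Prop) : Prop :=
  forall eps, 0 < eps ->
    exists a b : nat -> R,
      (forall k, a k <= b k) /\
      (forall x, A x -> exists k, a k < x < b k) /\
      (forall N, sum_f_R0 (fun k => b k - a k) N <= eps).

From Stdlib Require Import Reals Lra Lia ClassicalEpsilon List Classical Wf_nat.
Open Scope R_scope.

(* If [beta i x >= T] then [tauB^(i-1) x <= 1/T], and [tauB] preserves Lebesgue
   measure, so this event has measure at most [1/T].  For [floor_log n = m] we have
   [i <= n < 3 e^m] and the threshold [n psi m] is at least [e^m psi m], so the
   union of these events over the whole block [m] has measure at most [4 / psi m].
   As [sum 1/psi] converges, Borel–Cantelli over the blocks concludes.  Measures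
   are bounded throughout by finite covers with open intervals. *)

Fixpoint total_length (l : list (R * R)) : R :=
  match l with nil => 0 | p :: l' => snd p - fst p + total_length l' end.

Definition ordered_intervals (l : list (R * R)) : Prop :=
  Forall (fun p => fst p <= snd p) l.

Definition in_some_interval (x : R) (l : list (R * R)) : Prop :=
  exists p, In p l /\ fst p < x < snd p.

Definition coverable (A : R -> Prop) (e : R) : Prop :=
  exists l, ordered_intervals l /\ total_length l <= e /\
    forall x, A x -> in_some_interval x l.

Lemma total_length_app l1 l2 :
  total_length (l1 ++ l2) = total_length l1 + total_length l2.
Proof. induction l1 as [|p l1 IH]; simpl; [ring | rewrite IH; ring]. Qed.

Lemma total_length_nonneg l : ordered_intervals l -> 0 <= total_length l.
Proof. induction 1; simpl; lra. Qed.

Lemma in_some_interval_app x l1 l2 :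
  in_some_interval x l1 \/ in_some_interval x l2 -> in_some_interval x (l1 ++ l2).
Proof.
  intros [[p [Hp Hx]] | [p [Hp Hx]]]; exists p; split; auto;
    apply in_or_app; auto.
Qed.

Lemma coverable_weaken (A B : R -> Prop) e e' :
  (forall x, A x -> B x) -> e <= e' -> coverable B e -> coverable A e'.
Proof.
  intros HAB He [l [Hl [Hlen Hcov]]].
  exists l; split; [|split]; auto; lra.
Qed.

Lemma coverable_union (A B : R -> Prop) e1 e2 :
  coverable A e1 -> coverable B e2 -> coverable (fun x => A x \/ B x) (e1 + e2).
Proof.
  intros [l1 [W1 [L1 C1]]] [l2 [W2 [L2 C2]]].
  exists (l1 ++ l2); split; [|split].
  - apply Forall_app; auto.
  - rewrite total_length_app; lra.
  - intros x [Hx | Hx]; apply in_some_interval_app; auto.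
Qed.

Lemma coverable_segment a b δ :
  a <= b -> 0 < δ -> coverable (fun x => a <= x <= b) (b - a + δ).
Proof.
  intros Hab Hd. exists ((a - δ / 2, b + δ / 2) :: nil); split; [|split].
  - constructor; simpl; [lra | constructor].
  - simpl; lra.
  - intros x Hx. exists (a - δ / 2, b + δ / 2); split; [left; auto | simpl; lra].
Qed.

Lemma tau_range y : 0 <= tau y < 1.
Proof. unfold tau. destruct (base_Int_part (2 * y)). lra. Qed.

Lemma iter_tau_range n x : 0 <= x < 1 -> 0 <= Nat.iter n tau x < 1.
Proof. intros Hx. apply Nat.iter_invariant; auto. intros; apply tau_range. Qed.

Lemma iter_tauB_range n x : 0 <= x < 1 -> 0 <= Nat.iter n tauB x < 1.
Proof. intros Hx. apply Nat.iter_invariant; auto. intros; apply iter_tau_range; auto. Qed.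

Lemma tau_lower_half y : 0 <= y < 1 / 2 -> tau y = 2 * y.
Proof.
  intros Hy. unfold tau. rewrite <- (Int_part_spec (2 * y) 0); simpl; lra.
Qed.

Lemma tau_upper_half y : inB y -> tau y = 2 * y - 1.
Proof.
  unfold inB. intros Hy. unfold tau. rewrite <- (Int_part_spec (2 * y) 1); simpl; lra.
Qed.

Lemma iter_tau_before_hit n x : 0 <= x < 1 ->
  (forall k, (k < n)%nat -> ~ inB (Nat.iter k tau x)) ->
  Nat.iter n tau x = 2 ^ n * x.
Proof.
  induction n as [|n IH]; intros Hx Hmiss; simpl; [lra|].
  assert (E : Nat.iter n tau x = 2 ^ n * x) by (apply IH; auto).
  assert (Hr := iter_tau_range n x Hx).
  assert (Hn := Hmiss n (Nat.lt_succ_diag_r n)).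
  unfold inB in Hn. rewrite E in *. rewrite tau_lower_half; lra.
Qed.

Lemma first_hit_unique x n m : first_hit x n -> first_hit x m -> n = m.
Proof.
  intros [Hn Hbn] [Hm Hbm].
  destruct (Nat.lt_trichotomy n m) as [H | [H | H]]; auto; exfalso.
  - exact (Hbm n H Hn).
  - exact (Hbn m H Hm).
Qed.

Lemma first_hit_before x N : (exists k, (k < N)%nat /\ inB (Nat.iter k tau x)) ->
  exists n, (n < N)%nat /\ first_hit x n.
Proof.
  intros Hex.
  destruct (dec_inh_nat_subset_has_unique_least_element _
              (fun k => classic ((k < N)%nat /\ inB (Nat.iter k tau x))) Hex)
    as [n [[[HnN Hn] Hleast] _]].
  exists n; split; [|split]; auto.
  intros k Hk HB. specialize (Hleast k (conj (Nat.lt_trans _ _ _ Hk HnN) HB)). lia.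
Qed.

Lemma phi_first_hit x n : first_hit x n -> phi x = S n.
Proof.
  intros H. unfold phi.
  destruct (epsilon_spec (inhabits 0%nat) (fun m => exists n, m = S n /\ first_hit x n))
    as [n' [-> H']]; [exists (S n), n; auto|].
  f_equal. eapply first_hit_unique; eauto.
Qed.

Lemma tauB_first_hit x n : 0 <= x < 1 -> first_hit x n -> tauB x = 2 ^ S n * x - 1.
Proof.
  intros Hx H. unfold tauB. rewrite (phi_first_hit x n H), Nat.iter_succ.
  destruct H as [HB Hmiss]. rewrite iter_tau_before_hit in HB |- *; auto.
  rewrite tau_upper_half; simpl; auto. ring.
Qed.

Lemma inv_pow2_small δ : 0 < δ -> exists N, / 2 ^ N < δ.
Proof.
  intros Hd. destruct (pow_lt_1_zero (/ 2) ltac:(rewrite Rabs_right; lra) δ Hd) as [N HN].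
  exists N. specialize (HN N (le_n N)).
  rewrite pow_inv, Rabs_right in HN; auto.
  left. apply Rinv_0_lt_compat, pow_lt. lra.
Qed.

(* On points first hitting [B] at time [n], [tauB] is [x ↦ 2^(n+1) x - 1];
   [shrink n l] covers the preimage of [l] under that branch. *)
Definition shrink (n : nat) (l : list (R * R)) : list (R * R) :=
  map (fun p => ((1 + fst p) / 2 ^ S n, (1 + snd p) / 2 ^ S n)) l.

Fixpoint shrink_upto (N : nat) (l : list (R * R)) : list (R * R) :=
  match N with O => nil | S N' => shrink N' l ++ shrink_upto N' l end.

Lemma total_length_shrink n l : total_length (shrink n l) = total_length l / 2 ^ S n.
Proof.
  assert (H2 : 2 ^ S n <> 0) by (apply pow_nonzero; lra).
  unfold shrink. induction l as [|p l IH]; cbn [map total_length fst snd].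
  - field; auto.
  - rewrite IH. field; auto.
Qed.

Lemma total_length_shrink_upto N l :
  total_length (shrink_upto N l) = total_length l * (1 - / 2 ^ N).
Proof.
  induction N as [|N IH]; cbn [shrink_upto total_length].
  - simpl. rewrite Rinv_1. ring.
  - assert (H2 : 2 ^ N <> 0) by (apply pow_nonzero; lra).
    rewrite total_length_app, total_length_shrink, IH. simpl. field; auto.
Qed.

Lemma ordered_shrink_upto N l : ordered_intervals l -> ordered_intervals (shrink_upto N l).
Proof.
  intros Hl. induction N as [|N IH]; simpl; [constructor|].
  apply Forall_app; split; auto.
  assert (Hpos : 0 < / 2 ^ S N) by (apply Rinv_0_lt_compat, pow_lt; lra).
  apply Forall_map. eapply Forall_impl; [|exact Hl]. intros p Hp; cbn beta.
  unfold Rdiv. apply Rmult_le_compat_r; lra.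
Qed.

Lemma in_shrink_upto N n l x : (n < N)%nat ->
  in_some_interval (2 ^ S n * x - 1) l -> in_some_interval x (shrink_upto N l).
Proof.
  intros HnN [p [Hp Hx]].
  assert (Hin : in_some_interval x (shrink n l)).
  { assert (Hpos : 0 < 2 ^ S n) by (apply pow_lt; lra).
    assert (Hinv : 0 < / 2 ^ S n) by (apply Rinv_0_lt_compat; lra).
    eexists; split; [apply in_map, Hp|]; cbn [fst snd].
    replace x with ((1 + (2 ^ S n * x - 1)) / 2 ^ S n) by (field; lra).
    unfold Rdiv. split; apply Rmult_lt_compat_r; lra. }
  induction N as [|N IH]; [lia|]. simpl. apply in_some_interval_app.
  destruct (Nat.eq_dec n N) as [-> | Hne]; [left; auto | right; apply IH; lia].
Qed.

(* [tauB] preserves Lebesgue measure: the branches [x ↦ 2^(n+1) x - 1] have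
   total contraction [Σ 2^-(n+1) = 1], and points that do not reach [B] within
   [N] steps lie in [[0, 2^-N)]. *)
Lemma coverable_tauB_preimage (A : R -> Prop) e δ : coverable A e -> 0 < δ ->
  coverable (fun x => 0 <= x < 1 /\ A (tauB x)) (e + δ).
Proof.
  intros [l [Hl [Hlen Hcov]]] Hd.
  destruct (inv_pow2_small (δ / 2)) as [N HN]; [lra|].
  assert (Hpos : 0 < / 2 ^ N) by (apply Rinv_0_lt_compat, pow_lt; lra).
  exists ((- / 2 ^ N, / 2 ^ N) :: shrink_upto N l); split; [|split].
  - constructor; [simpl; lra | apply ordered_shrink_upto; auto].
  - simpl. rewrite total_length_shrink_upto.
    assert (0 <= total_length l * / 2 ^ N)
      by (apply Rmult_le_pos; [apply total_length_nonneg; auto | lra]).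
    lra.
  - intros x [Hx HA].
    destruct (classic (exists k, (k < N)%nat /\ inB (Nat.iter k tau x))) as [Hhit | Hmiss].
    + destruct (first_hit_before x N Hhit) as [n [HnN Hn]].
      apply (in_some_interval_app x ((- / 2 ^ N, / 2 ^ N) :: nil)); right.
      apply (in_shrink_upto N n); auto.
      rewrite <- (tauB_first_hit x n); auto.
    + exists (- / 2 ^ N, / 2 ^ N); split; [left; auto | simpl].
      assert (E : Nat.iter N tau x = 2 ^ N * x).
      { apply iter_tau_before_hit; auto. intros k Hk HB. apply Hmiss; eauto. }
      assert (Hr := iter_tau_range N x Hx). rewrite E in Hr.
      assert (Hp : 0 < 2 ^ N) by (apply pow_lt; lra).
      split; [lra|]. apply (Rmult_lt_reg_l (2 ^ N)); auto.
      rewrite Rinv_r; lra.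
Qed.

Lemma coverable_iter_tauB_preimage (A : R -> Prop) e j δ : coverable A e -> 0 < δ ->
  coverable (fun x => 0 <= x < 1 /\ A (Nat.iter j tauB x)) (e + δ).
Proof.
  intros HA. revert δ. induction j as [|j IH]; intros δ Hd.
  - eapply coverable_weaken; [| | exact HA]; [intros x [_ Hx]; exact Hx | lra].
  - assert (Hpre := coverable_tauB_preimage _ (e + δ / 2) (δ / 2) (IH (δ / 2) ltac:(lra))
                                                ltac:(lra)).
    eapply coverable_weaken; [| | exact Hpre]; [|lra].
    intros x [Hx Hj]. rewrite Nat.iter_succ_r in Hj.
    split; [|split]; auto. apply (iter_tauB_range 1); auto.
Qed.

(* [chi 0 = 0] (Rocq's [/ 0 = 0]), so [beta i x >= T > 0] forces a positive argument. *)
Lemma iter_tauB_le_of_beta_ge i x T : 0 < T -> 0 <= x < 1 -> beta i x >= T ->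
  Nat.iter (i - 1) tauB x <= / T.
Proof.
  intros HT Hx Hb. unfold beta, chi in Hb.
  pose proof (iter_tauB_range (i - 1) x Hx) as Hrange.
  set (y := Nat.iter (i - 1) tauB x) in *.
  destruct (base_Int_part (/ y)) as [Hfloor _].
  destruct (Req_dec y 0) as [Hy0 | Hy0].
  - rewrite Hy0, Rinv_0 in Hfloor, Hb. lra.
  - assert (Hy : 0 < y) by lra.
    rewrite <- (Rinv_inv y). apply Rinv_le_contravar; lra.
Qed.

Lemma coverable_beta_ge i T δ : 0 < T -> 0 < δ ->
  coverable (fun x => 0 <= x < 1 /\ beta i x >= T) (/ T + δ).
Proof.
  intros HT Hd.
  assert (HiT : 0 < / T) by (apply Rinv_0_lt_compat; auto).
  assert (Hseg := coverable_segment 0 (/ T) (δ / 2) ltac:(lra) ltac:(lra)).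
  assert (Hpre := coverable_iter_tauB_preimage _ _ (i - 1) (δ / 2) Hseg ltac:(lra)).
  eapply coverable_weaken; [| | exact Hpre]; [|lra].
  intros x [Hx Hb]. split; [|split]; auto.
  - apply iter_tauB_range; auto.
  - apply iter_tauB_le_of_beta_ge; auto.
Qed.

Lemma coverable_beta_ge_upto K T δ : 0 < T -> 0 < δ ->
  coverable (fun x => 0 <= x < 1 /\ exists i, (1 <= i <= K)%nat /\ beta i x >= T)
    (INR K / T + δ).
Proof.
  intros HT. revert δ. induction K as [|K IH]; intros δ Hd.
  - eapply coverable_weaken; [| | exact (coverable_segment 0 0 δ ltac:(lra) Hd)].
    + intros x [_ [i [Hi _]]]. lia.
    + simpl. lra.
  - assert (Hunion := coverable_union _ _ _ _ (IH (δ / 2) ltac:(lra))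
                        (coverable_beta_ge (S K) T (δ / 2) HT ltac:(lra))).
    eapply coverable_weaken; [| | exact Hunion].
    + intros x [Hx [i [Hi Hb]]].
      destruct (Nat.eq_dec i (S K)) as [-> | Hne]; [right | left]; split; auto.
      exists i. split; auto. lia.
    + rewrite S_INR. unfold Rdiv. lra.
Qed.

Lemma floor_log_spec n : (1 <= n)%nat ->
  INR (floor_log n) <= ln (INR n) < INR (floor_log n) + 1.
Proof.
  intros Hn. unfold floor_log.
  assert (Hln : 0 <= ln (INR n)).
  { destruct (Rle_or_lt 0 (ln (INR n))) as [H | H]; auto.
    apply exp_increasing in H. rewrite exp_0, exp_ln in H by (apply lt_0_INR; lia).
    apply (le_INR 1) in Hn. simpl in Hn. lra. }
  destruct (base_Int_part (ln (INR n))) as [Hlo Hhi].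
  assert (Hnonneg : (0 <= Int_part (ln (INR n)))%Z).
  { apply Z.lt_pred_le, lt_IZR. simpl. lra. }
  rewrite INR_IZR_INZ, Znat.Z2Nat.id by auto. lra.
Qed.

Lemma floor_log_exp_bounds n : (1 <= n)%nat ->
  exp (INR (floor_log n)) <= INR n < 3 * exp (INR (floor_log n)).
Proof.
  intros Hn. destruct (floor_log_spec n Hn) as [Hlo Hhi].
  assert (Hpos : 0 < INR n) by (apply lt_0_INR; lia).
  rewrite <- (exp_ln (INR n)) by auto.
  split.
  - destruct Hlo as [Hlt | Heq]; [left; apply exp_increasing; auto | rewrite Heq; lra].
  - apply Rlt_le_trans with (exp (INR (floor_log n) + 1)); [apply exp_increasing; auto|].
    rewrite exp_plus. pose proof exp_le_3. pose proof (exp_pos (INR (floor_log n))). nra.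
Qed.

Lemma floor_log_eventually_ge M : exists N, forall n, (N <= n)%nat -> (M <= floor_log n)%nat.
Proof.
  destruct (archimed (exp (INR M))) as [Hup _].
  assert (Hup0 : (0 <= up (exp (INR M)))%Z) by (apply le_IZR; pose proof (exp_pos (INR M)); lra).
  exists (S (Z.to_nat (up (exp (INR M))))). intros n Hn.
  destruct (floor_log_spec n ltac:(lia)) as [_ Hhi].
  assert (Hlarge : exp (INR M) < INR n).
  { apply Rlt_le_trans with (IZR (up (exp (INR M)))); auto.
    rewrite <- (Znat.Z2Nat.id _ Hup0), <- INR_IZR_INZ. apply le_INR. lia. }
  assert (HlnM : INR M < ln (INR n)).
  { rewrite <- (ln_exp (INR M)). apply ln_increasing; auto. apply exp_pos. }
  assert (Hlt : INR M < INR (S (floor_log n))) by (rewrite S_INR; lra).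
  apply INR_lt in Hlt. lia.
Qed.

Definition log_block_event (psi : nat -> R) (m : nat) (x : R) : Prop :=
  0 <= x < 1 /\ exists n, (1 <= n)%nat /\ floor_log n = m /\
    exists i, (1 <= i <= n)%nat /\ beta i x >= INR n * psi m.

(* In block [m] the indices satisfy [i <= n < 3 e^m] and the threshold is at least
   [e^m psi m], so the [beta]-bound applies with [K ≈ 3 e^m] and [T = e^m psi m]. *)
Lemma coverable_log_block_event psi m δ : 0 < psi m -> 0 < δ ->
  coverable (log_block_event psi m) (4 / psi m + δ).
Proof.
  intros Hpsi Hd.
  set (A := exp (INR m)).
  assert (HA : 1 <= A).
  { unfold A. rewrite <- exp_0. destruct (pos_INR m) as [H | H];
      [left; apply exp_increasing; auto | rewrite <- H; lra]. }
  set (K := Z.to_nat (up (3 * A))).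
  destruct (archimed (3 * A)) as [HK1 HK2].
  assert (HK : INR K = IZR (up (3 * A))).
  { unfold K. rewrite INR_IZR_INZ, Znat.Z2Nat.id; auto. apply le_IZR. lra. }
  assert (HT : 0 < A * psi m) by (apply Rmult_lt_0_compat; lra).
  eapply coverable_weaken; [| | exact (coverable_beta_ge_upto K (A * psi m) δ HT Hd)].
  - intros x [Hx [n [Hn [Hm [i [Hi Hb]]]]]]. split; auto. exists i.
    destruct (floor_log_exp_bounds n Hn) as [Hlo Hhi]. rewrite Hm in Hlo, Hhi. fold A in Hlo, Hhi.
    split.
    + assert (Hin : INR i <= INR n) by (apply le_INR; lia).
      assert (HiK : INR i < INR K) by lra.
      apply INR_lt in HiK. lia.
    + apply Rge_trans with (INR n * psi m); auto.
      apply Rle_ge, Rmult_le_compat_r; lra.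
  - assert (INR K <= 4 * A) by lra.
    apply Rplus_le_compat_r. unfold Rdiv. rewrite Rinv_mult.
    apply (Rmult_le_reg_r A); [lra|].
    replace (INR K * (/ A * / psi m) * A) with (INR K * / psi m) by (field; lra).
    replace (4 * / psi m * A) with (4 * A * / psi m) by ring.
    apply Rmult_le_compat_r; [left; apply Rinv_0_lt_compat|]; lra.
Qed.

Lemma infinite_sum_scal c l a : infinite_sum c l -> infinite_sum (fun m => a * c m) (a * l).
Proof.
  intros Hl. apply (Un_cv_ext (fun n => a * sum_f_R0 c n)).
  - intros n. rewrite scal_sum. apply sum_eq. intros; ring.
  - apply (CV_mult (fun _ => a)); auto.
    intros eps He. exists 0%nat. intros n _. unfold Rdist. rewrite Rminus_diag, Rabs_R0. lra.
Qed.

Lemma infinite_sum_tail_le c l : (forall m, 0 <= c m) -> infinite_sum c l ->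
  forall eps, 0 < eps -> exists M, forall k, sum_f_R0 (fun t => c (M + t)%nat) k <= eps.
Proof.
  intros Hc Hl eps He. destruct (Hl eps He) as [N HN].
  exists (S N). intros k.
  assert (Hgrow : Un_growing (sum_f_R0 c)) by (intros n; simpl; specialize (Hc (S n)); lra).
  assert (Hle := growing_ineq _ _ Hgrow Hl (S N + k)).
  rewrite (tech2 c N (S N + k)), Nat.add_comm, Nat.add_sub in Hle by lia.
  specialize (HN N (le_n N)). unfold Rdist in HN. apply Rabs_def2 in HN. lra.
Qed.

Lemma sum_inv_pow2_le_1 k : sum_f_R0 (fun t => / 2 ^ S t) k <= 1.
Proof.
  enough (E : sum_f_R0 (fun t => / 2 ^ S t) k = 1 - / 2 ^ S k).
  { rewrite E. assert (0 < / 2 ^ S k) by (apply Rinv_0_lt_compat, pow_lt; lra). lra. }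
  induction k as [|k IH]; simpl in *; [field|].
  rewrite IH. assert (2 ^ k <> 0) by (apply pow_nonzero; lra). field; auto.
Qed.

Fixpoint concat_upto (F : nat -> list (R * R)) (k : nat) : list (R * R) :=
  match k with O => nil | S k' => concat_upto F k' ++ F k' end.

Lemma total_length_concat_upto F k :
  total_length (concat_upto F (S k)) = sum_f_R0 (fun t => total_length (F t)) k.
Proof.
  induction k as [|k IH]; [simpl; ring|].
  change (concat_upto F (S (S k))) with (concat_upto F (S k) ++ F (S k)).
  rewrite total_length_app, IH. reflexivity.
Qed.

Lemma ordered_concat_upto F k :
  (forall t, ordered_intervals (F t)) -> ordered_intervals (concat_upto F k).
Proof.
  intros HF. induction k as [|k IH]; simpl; [constructor|].
  apply Forall_app; split; [exact IH | apply HF].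
Qed.

Lemma sum_nth_length_le l N : ordered_intervals l ->
  sum_f_R0 (fun k => snd (nth k l (0, 0)) - fst (nth k l (0, 0))) N <= total_length l.
Proof.
  intros Hl. revert N. induction Hl as [|p l Hp Hl IH]; intros N.
  - rewrite (sum_eq _ (fun _ => 0)), sum_cte; [simpl; lra|].
    intros [|i] _; simpl; ring.
  - pose proof (total_length_nonneg l Hl).
    destruct N as [|N]; [simpl; lra|].
    rewrite decomp_sum by lia. simpl. specialize (IH N). lra.
Qed.

Section Enumeration.

Variable F : nat -> list (R * R).
Hypothesis F_nonempty : forall t, F t <> nil.

Lemma concat_upto_length k : (k <= length (concat_upto F k))%nat.
Proof.
  induction k as [|k IH]; simpl; [lia|]. rewrite length_app.
  specialize (F_nonempty k). destruct (F k); [congruence | simpl; lia].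
Qed.

Lemma nth_concat_upto k k' i d : (k <= k')%nat -> (i < length (concat_upto F k))%nat ->
  nth i (concat_upto F k') d = nth i (concat_upto F k) d.
Proof.
  intros Hk Hi. induction Hk as [|k' Hk IH]; auto.
  simpl. rewrite app_nth1; auto.
  eapply Nat.lt_le_trans; [exact Hi|].
  clear IH. induction Hk; simpl; [lia | rewrite length_app; lia].
Qed.

End Enumeration.

(* The [k]-th interval is read off the prefix [concat_upto F (S k)], which is long
   enough once every list is nonempty; empty lists are padded by [(0, 0)]. *)
Lemma interval_sequence_of_lists (F : nat -> list (R * R)) (B : R) :
  (forall t, ordered_intervals (F t)) ->
  (forall k, sum_f_R0 (fun t => total_length (F t)) k <= B) ->
  exists a b : nat -> R, (forall k, a k <= b k) /\
    (forall t x, in_some_interval x (F t) -> exists k, a k < x < b k) /\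
    (forall N, sum_f_R0 (fun k => b k - a k) N <= B).
Proof.
  intros Hord HB.
  set (F' := fun t => (0, 0) :: F t).
  assert (Hne : forall t, F' t <> nil) by (intros t; discriminate).
  assert (Hord' : forall t, ordered_intervals (F' t))
    by (intros t; constructor; [simpl; lra | apply Hord]).
  set (s := fun k => nth k (concat_upto F' (S k)) (0, 0)).
  exists (fun k => fst (s k)), (fun k => snd (s k)). split; [|split].
  - intros k. unfold s.
    apply (proj1 (Forall_nth _ _) (ordered_concat_upto F' (S k) Hord')).
    pose proof (concat_upto_length F' Hne (S k)). lia.
  - intros t x [p [Hp Hx]].
    destruct (In_nth _ _ (0, 0) Hp) as [j [Hj Ej]].
    set (i := (length (concat_upto F' t) + S j)%nat).
    assert (Hlen := concat_upto_length F' Hne t).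
    assert (Hi : nth i (concat_upto F' (S t)) (0, 0) = p).
    { simpl. unfold i. rewrite app_nth2 by lia.
      replace (_ + S j - _)%nat with (S j) by lia. auto. }
    exists i. unfold s. rewrite (nth_concat_upto F' (S t) (S i)); [rewrite Hi; auto | |].
    + unfold i; lia.
    + simpl. rewrite length_app. unfold i. simpl. lia.
  - intros N.
    rewrite (sum_eq _ (fun k => snd (nth k (concat_upto F' (S N)) (0, 0))
                                - fst (nth k (concat_upto F' (S N)) (0, 0)))).
    + eapply Rle_trans; [apply sum_nth_length_le, ordered_concat_upto; auto|].
      rewrite total_length_concat_upto, (sum_eq _ (fun t => total_length (F t))); auto.
      intros t _. simpl. ring.
    + intros k Hk. unfold s. rewrite (nth_concat_upto F' (S k) (S N)); auto; [lia|].
      pose proof (concat_upto_length F' Hne (S k)). lia.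
Qed.

Lemma lebesgue_null_subset (A B : R -> Prop) :
  (forall x, A x -> B x) -> lebesgue_null B -> lebesgue_null A.
Proof.
  intros HAB HB eps He. destruct (HB eps He) as [a [b [Hab [Hcov Hsum]]]].
  exists a, b. split; [|split]; auto.
Qed.

Lemma borel_cantelli_null (E : nat -> R -> Prop) (c : nat -> R) (l : R) :
  (forall m, 0 <= c m) -> infinite_sum c l ->
  (forall m δ, 0 < δ -> coverable (E m) (c m + δ)) ->
  lebesgue_null (fun x => forall M, exists m, (M <= m)%nat /\ E m x).
Proof.
  intros Hc Hl HE eps He.
  destruct (infinite_sum_tail_le c l Hc Hl (eps / 2) ltac:(lra)) as [M HM].
  assert (Hcov : forall t, exists lt, ordered_intervals lt /\
            total_length lt <= c (M + t)%nat + / 2 ^ S t * (eps / 2) /\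
            forall x, E (M + t)%nat x -> in_some_interval x lt).
  { intros t. apply HE. apply Rmult_lt_0_compat; [apply Rinv_0_lt_compat, pow_lt|]; lra. }
  destruct (choice _ Hcov) as [F HF].
  destruct (interval_sequence_of_lists F eps) as [a [b [Hab [Hin Hsum]]]].
  - intros t. apply HF.
  - intros k. eapply Rle_trans; [apply sum_Rle; intros t _; apply HF|].
    rewrite sum_plus, <- scal_sum.
    pose proof (HM k). pose proof (sum_inv_pow2_le_1 k). nra.
  - exists a, b. split; [|split]; auto.
    intros x Hx. destruct (Hx M) as [m [Hm HEm]].
    apply (Hin (m - M)%nat). apply HF. replace (M + (m - M))%nat with m by lia. auto.
Qed.

Theorem mainTheorem10 (psi : nat -> R) (hpsi : inPsi psi) :
  lebesgue_null (fun x =>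
    0 <= x < 1 /\
    forall N : nat, exists n : nat, (N <= n)%nat /\ (1 <= n)%nat /\
      exists i : nat, (1 <= i <= n)%nat /\
        beta i x >= INR n * psi (floor_log n)).
Proof.
  destruct hpsi as [Hpos [l Hl]].
  apply lebesgue_null_subset with
    (fun x => forall M, exists m, (M <= m)%nat /\ log_block_event psi (S m) x).
  - intros x [Hx Hinf] M.
    destruct (floor_log_eventually_ge (S M)) as [N HN].
    destruct (Hinf (max 1 N)) as [n [HnN [Hn [i [Hi Hb]]]]].
    assert (Hm := HN n ltac:(lia)).
    exists (floor_log n - 1)%nat. split; [lia|].
    replace (S (floor_log n - 1)) with (floor_log n) by lia.
    split; [auto | exists n; repeat split; auto; exists i; auto].
  - apply borel_cantelli_null with (c := fun m => 4 / psi (S m)) (l := 4 * l).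
    + intros m. assert (0 < psi (S m)) by (apply Hpos; lia).
      left. apply Rdiv_lt_0_compat; lra.
    + apply infinite_sum_scal, Hl.
    + intros m δ Hd. apply coverable_log_block_event; auto. apply Hpos. lia.
Qed.
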